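(* Let $A(n)=\sum_{r=0}^n n!/r!$ for $n\ge0$ (so $A(n)/n!$ is the $n$th partial sum of $\sum_{r\ge0}1/r!$). Define $Q(0)=0$, $Q(1)=1$, $Q(n)=b(n)Q(n-1)+Q(n-2)$ for $n\ge2$, where $b(n)=2n/3$ if $3\mid n$ and $b(n)=1$ if $3\nmid n$. For an integer $x$ let $[x]_2$ be the largest power $2^k$ ($k\ge0$) dividing $x$, with $[0]_2=\infty$. Suppose that for every $n\ge 0$: (i) $[Q(3n)]_2\le 4[n(n+2)]_2$; (ii) $[Q(3n+1)]_2\le 2[n+1]_2$; (iii) $[Q(3n+2)]_2=1$; (iv) $[A(n)]_2\le (n+1)^2$. Then exactly two partial sums $A(m)/m!$ of the Taylor series $e=\sum_{r\ge0}1/r!$ are convergents of the simple continued fraction expansion of $e$.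
   Context: The convergents of $e$ are the rationals obtained by truncating the simple continued fraction $e=[2,1,2,1,1,4,1,1,6,1,1,8,\dots]$; their denominators are the $Q(n)$ above. A partial sum ''is a convergent'' if it equals one of these rationals. *)

From mathcomp Require Import all_boot all_order all_algebra.
Set Implicit Arguments. Unset Strict Implicit. Unset Printing Implicit Defensive.
Import Order.TTheory GRing.Theory Num.Theory.

(* A(n) = sum_{r=0}^n n!/r!  (each n!/r! is an exact integer division) *)
Definition A (n : nat) : nat := \sum_(r < n.+1) (n`! %/ r`!).

Definition b (n : nat) : nat := if 3 %| n then (2 * n) %/ 3 else 1.

(* QQ n = (Q n, Q n.+1) *)
Fixpoint QQ (n : nat) : nat * nat :=
  match n with
  | 0 => (0, 1)
  | k.+1 => let: (x, y) := QQ k in (y, b k.+2 * y + x)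
  end.
Definition Q (n : nat) : nat := (QQ n).1.

(* [x]_2 : largest power of 2 dividing x; None stands for infinity ([0]_2). *)
Definition pow2part (x : nat) : option nat :=
  if x == 0 then None else Some (2 ^ logn 2 x).

Definition scale_ext (c : nat) (a : option nat) : option nat :=
  match a with Some v => Some (c * v) | None => None end.

Definition le_ext (a b : option nat) : Prop :=
  match a, b with
  | _, None => True
  | None, Some _ => False
  | Some x, Some y => (x <= y)%N
  end.

(* partial quotients of e = [2; 1, 2, 1, 1, 4, 1, 1, 6, ...] *)
Definition e_pq (i : nat) : nat :=
  if i == 0 then 2 else if i %% 3 == 2 then (2 * (i + 1)) %/ 3 else 1.

Fixpoint cfrac (s : seq nat) : rat :=
  match s with
  | [::] => 0
  | [:: a] => a%:R
  | a :: s' => a%:R + (cfrac s')^-1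
  end%R.

Definition e_convergent (k : nat) : rat := cfrac (mkseq e_pq k.+1).

Definition partial_sum (m : nat) : rat := ((A m)%:R / (m`!)%:R)%R.

Definition is_e_convergent (q : rat) : Prop := exists k, q = e_convergent k.

Example Q_check : map Q (iota 0 7) = [:: 0; 1; 1; 3; 4; 7; 32]. Proof. by []. Qed.
Example A_check : A 3 = 16. Proof. by rewrite /A !big_ord_recr big_ord0. Qed.
Example pq_check : mkseq e_pq 9 = [:: 2; 1; 2; 1; 1; 4; 1; 1; 6]. Proof. by []. Qed.

From Stdlib Require Import NArith.
From mathcomp Require Import all_boot all_order all_algebra.
From mathcomp Require Import zify ring.
Set Implicit Arguments. Unset Strict Implicit. Unset Printing Implicit Defensive.
Import GRing.Theory Num.Theory.

(* If A(m)/m! equals the convergent P(j)/Q(j), then Q(j) divides m! because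
   P(j) and Q(j) are coprime, and since Q(3n+1) >= (n+1)! this bounds the
   index: j <= 3m + 3.  Comparing 2-adic valuations in A(m) Q(j) = P(j) m!
   gives v_2(m!) <= v_2(A(m)) + v_2(Q(j)); the left side is at least m/2,
   while the hypotheses bound the right side by O(log m).  Hence m < 52, and
   these finitely many cases are decided by computation: only A(1)/1! = 2/1
   and A(3)/3! = 8/3 are convergents. *)

Fixpoint e_pair (u0 u1 : nat) (n : nat) : nat * nat :=
  if n is k.+1 then let: (x, y) := e_pair u0 u1 k in (y, b k.+2 * y + x)
  else (u0, u1).

Lemma e_pair_rec u0 u1 n :
  (e_pair u0 u1 n.+2).1 = b n.+2 * (e_pair u0 u1 n.+1).1 + (e_pair u0 u1 n).1.
Proof. by rewrite /=; case: (e_pair u0 u1 n). Qed.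

Lemma QQE n : QQ n = e_pair 0 1 n.
Proof. by elim: n => //= n ->. Qed.

(* The numerators p_(n-1) of the convergents, with p_(-1) = 1 and p_0 = 2. *)
Definition P (n : nat) : nat := (e_pair 1 2 n).1.

Lemma P_rec n : P n.+2 = b n.+2 * P n.+1 + P n.
Proof. exact: e_pair_rec. Qed.

Lemma Q_rec n : Q n.+2 = b n.+2 * Q n.+1 + Q n.
Proof. rewrite /Q !QQE; exact: e_pair_rec. Qed.

Lemma b_gt0 n : 0 < b n.+2.
Proof. by rewrite /b; case: ifP => // _; rewrite divn_gt0 // mulnS. Qed.

Lemma b_mul3 n : b (3 * n) = 2 * n.
Proof. by rewrite /b dvdn_mulr // mulnCA mulKn. Qed.

Lemma b_eq1 n : ~~ (3 %| n) -> b n = 1.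
Proof. by rewrite /b => /negbTE ->. Qed.

Lemma e_pq_S k : e_pq k.+1 = b k.+2.
Proof.
rewrite /e_pq /b addn1; congr (if _ then _ else _).
by apply/idP/idP => H; lia.
Qed.

Lemma P_gt0 n : 0 < P n.
Proof.
suff: 0 < P n <= P n.+1 by case/andP.
elim: n => // n /andP [hn hle].
by rewrite P_rec (leq_trans hn hle) (leq_trans _ (leq_addr _ _)) // leq_pmull ?b_gt0.
Qed.

Lemma Q_le_succ n : Q n <= Q n.+1.
Proof. by case: n => // n; rewrite Q_rec (leq_trans (leq_pmull _ (b_gt0 n))) ?leq_addr. Qed.

Lemma Q_mono : {homo Q : i j / i <= j}.
Proof. exact: homo_leq leqnn leq_trans Q_le_succ. Qed.

Lemma Q_gt0 n : 0 < Q n.+1.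
Proof. exact: Q_mono (isT : 1 <= n.+1). Qed.

Lemma Q_3S n : Q (3 * n.+1) = 2 * n.+1 * Q (3 * n + 2) + Q (3 * n + 1).
Proof.
have -> : 3 * n.+1 = (3 * n + 1).+2 by lia.
by rewrite Q_rec (_ : (3 * n + 1).+2 = 3 * n.+1) ?b_mul3 -?addnS //; lia.
Qed.

Lemma Q_3S1 n : Q (3 * n.+1 + 1) = Q (3 * n.+1) + Q (3 * n + 2).
Proof.
have -> : 3 * n.+1 + 1 = (3 * n + 2).+2 by lia.
rewrite Q_rec b_eq1 ?mul1n; last by lia.
by rewrite (_ : (3 * n + 2).+1 = 3 * n.+1) //; lia.
Qed.

Lemma fact_le_Q n : n.+1`! <= Q (3 * n + 1).
Proof.
elim: n => // n IH.
have Q12 : Q (3 * n + 1) <= Q (3 * n + 2) by apply: Q_mono; lia.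
rewrite Q_3S1 Q_3S factS; nia.
Qed.

Lemma PQ_det j :
  (P j.+1 * Q j + 1 = P j * Q j.+1) \/ (P j * Q j.+1 + 1 = P j.+1 * Q j).
Proof.
by elim: j => [|j IH]; [left | rewrite P_rec Q_rec; case: IH; [right | left]; nia].
Qed.

Lemma coprime_PQ j : coprime (P j) (Q j).
Proof.
rewrite /coprime -dvdn1.
have gP : gcdn (P j) (Q j) %| P j * Q j.+1 by rewrite dvdn_mulr ?dvdn_gcdl.
have gQ : gcdn (P j) (Q j) %| P j.+1 * Q j by rewrite dvdn_mull ?dvdn_gcdr.
by case: (PQ_det j) => E; [rewrite -(dvdn_addr _ gQ) E | rewrite -(dvdn_addr _ gP) E].
Qed.

(* The entries (p_k, p_(k-1), q_k, q_(k-1)) of the matrix product of the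
   [[a, 1], [1, 0]] for a in s = [:: a_0; ...; a_k]. *)
Fixpoint cf_nd (s : seq nat) : nat * nat * nat * nat :=
  if s is a :: s' then
    let: (p, p', q, q') := cf_nd s' in (a * p + q, a * p' + q', p, p')
  else (1, 0, 0, 1).

Lemma cf_nd_rcons s a :
  cf_nd (rcons s a) = let: (p, p', q, q') := cf_nd s in (a * p + p', p, a * q + q', q).
Proof.
elim: s => [|x s IH] /=; first by rewrite !muln1 !muln0.
by rewrite IH; case: (cf_nd s) => [[[p p'] q] q'] /=; congr (_, _, _, _); ring.
Qed.

Lemma cf_nd_num_gt0 s : all (leq 1) s -> 0 < (cf_nd s).1.1.1.
Proof.
elim: s => [|x s IH] //= /andP [hx /IH]; case: (cf_nd s) => [[[p p'] q] q'] /=.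
by move=> hp; rewrite addn_gt0 muln_gt0 hx hp.
Qed.

Lemma cfrac_cf_nd a s : all (leq 1) s ->
  cfrac (a :: s) = let: (p, _, q, _) := cf_nd (a :: s) in (p%:R / q%:R)%R.
Proof.
elim: s a => [|x s IH] a; first by rewrite /= muln1 addn0 divr1.
move=> hs; have hp := cf_nd_num_gt0 hs; case/andP: hs => _ hs.
rewrite (_ : cfrac _ = a%:R + (cfrac (x :: s))^-1)%R // (IH x hs) /=; move: hp => /=.
case: (cf_nd s) => [[[p p'] q] q'] /= hp.
rewrite invf_div natrD natrM; field.
by rewrite -natrM -natrD pnatr_eq0 -lt0n.
Qed.

Lemma cf_nd_e k : cf_nd (mkseq e_pq k.+1) = (P k.+1, P k, Q k.+1, Q k).
Proof. by elim: k => // k IH; rewrite mkseqS cf_nd_rcons IH e_pq_S P_rec Q_rec. Qed.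

Lemma e_convergentE k : e_convergent k = ((P k.+1)%:R / (Q k.+1)%:R)%R.
Proof.
have pos : all (leq 1) (behead (mkseq e_pq k.+1)).
  apply/allP => _ /mem_behead /mapP [[|i] _ ->] //.
  by rewrite e_pq_S b_gt0.
rewrite /e_convergent; case E: (mkseq e_pq k.+1) pos => [//|a s] /cfrac_cf_nd ->.
by rewrite -E cf_nd_e.
Qed.

Lemma partial_sum_eq_convergent m k :
  partial_sum m = e_convergent k <-> A m * Q k.+1 = P k.+1 * m`!.
Proof.
rewrite e_convergentE /partial_sum; split => [|E].
- move/eqP; rewrite eqr_div ?pnatr_eq0 -?lt0n ?fact_gt0 ?Q_gt0 // -!natrM eqr_nat.
  by move/eqP.
- by apply/eqP; rewrite eqr_div ?pnatr_eq0 -?lt0n ?fact_gt0 ?Q_gt0 // -!natrM E.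
Qed.

Lemma A_rec m : A m.+1 = m.+1 * A m + 1.
Proof.
rewrite /A big_ord_recr /= divnn fact_gt0 big_distrr /=; congr (_ + _).
apply: eq_bigr => i _; rewrite factS muln_divA //.
by rewrite (@fact_split m i) ?dvdn_mulr // -ltnS.
Qed.

Lemma A_gt0 m : 0 < A m.
Proof. by case: m => [|m]; rewrite ?A_rec ?addn1 // /A big_ord1. Qed.

Lemma half_le_logn2_fact m : m./2 <= logn 2 m`!.
Proof.
rewrite logn_fact //; case: m => // m.
by rewrite big_ltn // expn1 divn2 leq_addr.
Qed.

Lemma exp2_gt_poly t : 26 <= t -> 64 * (t + 2) ^ 4 < 2 ^ t.
Proof.
elim: t => // t IH; rewrite leq_eqVlt => /orP [/eqP <- | ht]; first lia.
have step : (t + 2).+1 ^ 4 <= 2 * (t + 2) ^ 4.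
  have : 28 <= t + 2 by lia.
  by move: (t + 2) => x hx; rewrite !expnS expn0 !muln1; nia.
have := IH ht; rewrite addSn (expnS 2 t).
move: (2 ^ t) ((t + 2) ^ 4) ((t + 2).+1 ^ 4) step => Z Y X; lia.
Qed.

Lemma pow2part_gt0 x : 0 < x -> pow2part x = Some (2 ^ logn 2 x).
Proof. by rewrite /pow2part lt0n => /negbTE ->. Qed.

Lemma pow2_logn_le x : 0 < x -> 2 ^ logn 2 x <= x.
Proof. by move=> hx; rewrite dvdn_leq ?pfactor_dvdnn. Qed.

Section TwoAdicBounds.

Hypothesis Q3_2adic :
  forall n, le_ext (pow2part (Q (3 * n))) (scale_ext 4 (pow2part (n * (n + 2)))).
Hypothesis Q3D1_2adic :
  forall n, le_ext (pow2part (Q (3 * n + 1))) (scale_ext 2 (pow2part (n + 1))).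
Hypothesis Q3D2_2adic : forall n, pow2part (Q (3 * n + 2)) = Some 1.
Hypothesis A_2adic : forall n, le_ext (pow2part (A n)) (Some ((n + 1) ^ 2)).

Lemma pow2_logn_Q_le n j : 0 < j <= 3 * n + 2 -> 2 ^ logn 2 (Q j) <= 4 * n.+1 * n.+2.
Proof.
case: j => // j /= hj; have hQ := Q_gt0 j.
have [k [r [Ej hr]]] : exists k r, j.+1 = 3 * k + r /\ r < 3.
  by exists (j.+1 %/ 3), (j.+1 %% 3); rewrite mulnC -divn_eq ltn_mod.
rewrite Ej in hQ hj *; case: r hr Ej hQ hj => [|[|[|//]]] _ Ej hQ hj;
  rewrite ?addn0 in Ej hQ hj *.
- have hk0 : 0 < k by lia.
  have hk : 0 < k * (k + 2) by rewrite muln_gt0 hk0 addn_gt0 hk0.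
  move: (Q3_2adic k) (pow2_logn_le hk); rewrite !pow2part_gt0 //=.
  move: (2 ^ _) (2 ^ _) => a c; have hkn : k <= n by lia.
  nia.
- have hk : 0 < k + 1 by rewrite addn1.
  move: (Q3D1_2adic k) (pow2_logn_le hk); rewrite !pow2part_gt0 //=.
  move: (2 ^ _) (2 ^ _) => a c; have hkn : k <= n by lia.
  nia.
- by move: (Q3D2_2adic k); rewrite pow2part_gt0 // => -[->].
Qed.

Lemma large_partial_sum_neq m j :
  52 <= m -> 0 < j <= 3 * m + 3 -> A m * Q j != P j * m`!.
Proof.
case: j => // j hm /= hj; apply/eqP => E.
have hv : logn 2 m`! <= logn 2 (A m) + logn 2 (Q j.+1).
  by rewrite -lognM ?A_gt0 ?Q_gt0 // E lognM ?P_gt0 ?fact_gt0 // leq_addl.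
have hQ : 2 ^ logn 2 (Q j.+1) <= 4 * m.+2 * m.+3.
  by apply: pow2_logn_Q_le; rewrite /=; lia.
have hA := A_2adic m; rewrite pow2part_gt0 ?A_gt0 //= in hA.
have h2 : 2 ^ m./2 <= (m + 1) ^ 2 * (4 * m.+2 * m.+3).
  rewrite (leq_trans _ (leq_mul hA hQ)) // -expnD leq_pexp2l //.
  exact: leq_trans (half_le_logn2_fact m) hv.
set t := m./2 in h2; have ht : m.+3 <= 2 * (t + 2).
  by rewrite /t -(odd_double_half m) -muln2; case: (odd m); lia.
have hpoly : (m + 1) ^ 2 * (4 * m.+2 * m.+3) <= 64 * (t + 2) ^ 4.
  have h2t := ltnW ht; have h1t := ltnW h2t.
  rewrite (_ : 64 * _ = (2 * (t + 2)) ^ 2 * (4 * (2 * (t + 2)) * (2 * (t + 2)))).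
    by rewrite leq_mul ?leq_mul ?leq_exp2r ?addn1.
  by ring.
have : 64 * (t + 2) ^ 4 < 2 ^ t by apply: exp2_gt_poly; rewrite /t -divn2; lia.
by rewrite ltnNge (leq_trans h2 hpoly).
Qed.

End TwoAdicBounds.

(* Binary mirrors of e_pair, A and the factorial, so that the cases m < 52
   can be decided by evaluation. *)
Fixpoint e_pairN (u0 u1 : N) (n : nat) : N * N :=
  if n is k.+1 then
    let: (x, y) := e_pairN u0 u1 k in (y, N.add (N.mul (N.of_nat (b k.+2)) y) x)
  else (u0, u1).

Fixpoint AN (n : nat) : N :=
  if n is k.+1 then N.add (N.mul (N.of_nat k.+1) (AN k)) 1%num else 1%num.

Fixpoint factN (n : nat) : N :=
  if n is k.+1 then N.mul (N.of_nat k.+1) (factN k) else 1%num.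

Lemma e_pairN_of_nat u0 u1 n :
  e_pairN (N.of_nat u0) (N.of_nat u1) n =
  (N.of_nat (e_pair u0 u1 n).1, N.of_nat (e_pair u0 u1 n).2).
Proof.
elim: n => //= n ->; case: (e_pair u0 u1 n) => x y /=.
by rewrite Nat2N.inj_add Nat2N.inj_mul.
Qed.

Lemma AN_of_nat n : AN n = N.of_nat (A n).
Proof.
elim: n => [|n IH]; first by rewrite /A big_ord1.
by rewrite A_rec /= IH Nat2N.inj_add Nat2N.inj_mul.
Qed.

Lemma factN_of_nat n : factN n = N.of_nat n`!.
Proof. by elim: n => //= n ->; rewrite Nat2N.inj_mul. Qed.

Definition small_check : bool :=
  all (fun m => all (fun j =>
      [|| N.mul (AN m) (e_pairN (N.of_nat 0) (N.of_nat 1) j).1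
          != N.mul (e_pairN (N.of_nat 1) (N.of_nat 2) j).1 (factN m), m == 1 | m == 3])
    (iota 1 (3 * m + 3))) (iota 0 52).

Lemma small_checkP : small_check.
Proof. by vm_compute. Qed.

Lemma small_partial_sum_eq m j :
  m < 52 -> 0 < j <= 3 * m + 3 -> A m * Q j = P j * m`! -> m = 1 \/ m = 3.
Proof.
move=> hm hj E; move/allP/(_ m): small_checkP; rewrite mem_iota hm => /(_ isT).
move/allP/(_ j); rewrite mem_iota add1n ltnS hj => /(_ isT).
rewrite !e_pairN_of_nat AN_of_nat factN_of_nat -!Nat2N.inj_mul -QQE.
by rewrite -/(Q j) -/(P j) !multE E eqxx /= => /orP [] /eqP; [left | right].
Qed.

Lemma partial_sum_eq_index_le m j : A m * Q j = P j * m`! -> j <= 3 * m + 3.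
Proof.
move=> E; have hc : coprime (Q j) (P j) by rewrite coprime_sym coprime_PQ.
have hQ : Q j <= m`! by rewrite dvdn_leq ?fact_gt0 // -(Gauss_dvdr _ hc) -E dvdn_mull.
rewrite leqNgt; apply/negP => hj.
have hj' : 3 * m.+1 + 1 <= j by lia.
have := leq_trans (fact_le_Q m.+1) (leq_trans (Q_mono hj') hQ).
by rewrite !factS; have := fact_gt0 m; nia.
Qed.

Theorem theoremA4 :
  (forall n : nat,
     le_ext (pow2part (Q (3 * n))) (scale_ext 4 (pow2part (n * (n + 2))))) ->
  (forall n : nat,
     le_ext (pow2part (Q (3 * n + 1))) (scale_ext 2 (pow2part (n + 1)))) ->
  (forall n : nat, pow2part (Q (3 * n + 2)) = Some 1) ->
  (forall n : nat, le_ext (pow2part (A n)) (Some ((n + 1) ^ 2))) ->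
  exists m1 m2 : nat,
    m1 <> m2 /\
    (forall m : nat, is_e_convergent (partial_sum m) <-> (m = m1 \/ m = m2)).
Proof.
move=> HQ3 HQ3D1 HQ3D2 HA; exists 1, 3; split=> // m; split.
- case=> k /partial_sum_eq_convergent E.
  have hk : 0 < k.+1 <= 3 * m + 3 by rewrite /= (partial_sum_eq_index_le E).
  have [hm | hm] := ltnP m 52; first exact: small_partial_sum_eq hm hk E.
  by move/eqP: E; rewrite (negbTE (large_partial_sum_neq HQ3 HQ3D1 HQ3D2 HA hm hk)).
- have A0 : A 0 = 1 by rewrite /A big_ord1.
  by case=> ->; [exists 0 | exists 2]; apply/partial_sum_eq_convergent; rewrite !A_rec A0.
Qed.
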